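(* Let $\{\Omega_n\}_{n\ge1}$ be open convex subdomains of $\Omega$ such that for every $\delta>0$ there is $N(\delta)$ with $\overline{\Omega_\delta}\subset\Omega_n\subset\Omega$ for all $n\ge N(\delta)$, and let $v_n\in W^+(\Omega_n)$. Assume: (i) there is $v_0\in W^+(\Omega)$ with $\lim_{n\to\infty}v_n(\boldsymbol{x})=v_0(\boldsymbol{x})$ for every $\boldsymbol{x}\in\Omega$; (ii) for each $n$, the border $b_n$ of $v_n$ (a function on $\partial\Omega_n$, $b_n(\boldsymbol{y})=\liminf_{\Omega_n\ni\boldsymbol{x}\to\boldsymbol{y}}v_n(\boldsymbol{x})$) is real-valued and continuous on $\partial\Omega_n$; (iii) there is $\tilde b\in C^0(\partial\Omega)$ such that the graphs $\boldsymbol{S}_n=\{(\boldsymbol{x},b_n(\boldsymbol{x})):\boldsymbol{x}\in\partial\Omega_n\}$ have topological limit $\lim^T_{n\to\infty}\boldsymbol{S}_n=\tilde{\boldsymbol{S}}$, where $\tilde{\boldsymbol{S}}=\{(\boldsymbol{x},\tilde b(\boldsymbol{x})):\boldsymbol{x}\in\partial\Omega\}$. Let $b_0$ be the border of $v_0$, $b_0(\boldsymbol{x})=\liminf_{\Omega\ni\boldsymbol{x}'\to\boldsymbol{x}}v_0(\boldsymbol{x}')$. Then $b_0(\boldsymbol{x})\le\tilde b(\boldsymbol{x})$ for all $\boldsymbol{x}\in\partial\Omega$.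
   Context: $\Omega\subset\mathbb{R}^d$ is a bounded open convex domain; for an open convex set $U$, $W^+(U)$ denotes the set of convex real-valued functions on $U$. For $\delta>0$, $\Omega_\delta=\{\boldsymbol{x}\in\Omega:\operatorname{dist}(\boldsymbol{x},\partial\Omega)>\delta\}$. Topological limits: for sets $E_n\subset\mathbb{R}^m$, the superior topological limit $\overline{\lim}^T E_n$ is the set of $\boldsymbol{x}$ such that there exist a subsequence $n_k$ and $\boldsymbol{x}_{n_k}\in E_{n_k}$ with $\boldsymbol{x}_{n_k}\to\boldsymbol{x}$; the inferior topological limit $\underline{\lim}^T E_n$ is the set of $\boldsymbol{x}$ such that there exist $\boldsymbol{x}_n\in E_n$ (for all large $n$) with $\boldsymbol{x}_n\to\boldsymbol{x}$; if these coincide, the common set is the topological limit $\lim^T E_n$. *)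

From Stdlib Require Import Reals Lra.
Open Scope R_scope.

(* Points of R^d: real sequences vanishing from index d on. *)
Definition Rd (d : nat) := {x : nat -> R | forall i, (d <= i)%nat -> x i = 0}.
Definition coord {d : nat} (x : Rd d) : nat -> R := proj1_sig x.

Lemma comb_ok (d : nat) (t : R) (x y : Rd d) :
  forall i, (d <= i)%nat -> t * coord x i + (1 - t) * coord y i = 0.
Proof.
  intros i Hi. unfold coord. rewrite (proj2_sig x i Hi), (proj2_sig y i Hi). ring.
Qed.

Definition comb {d : nat} (t : R) (x y : Rd d) : Rd d :=
  exist _ (fun i => t * coord x i + (1 - t) * coord y i) (comb_ok d t x y).

Definition distRd {d : nat} (x y : Rd d) : R :=
  sqrt (sum_f_R0 (fun i => (coord x i - coord y i) ^ 2) d).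
Definition normRd {d : nat} (x : Rd d) : R :=
  sqrt (sum_f_R0 (fun i => (coord x i) ^ 2) d).

Definition distRd1 {d : nat} (z w : Rd d * R) : R :=
  sqrt ((distRd (fst z) (fst w)) ^ 2 + (snd z - snd w) ^ 2).

Definition is_open {d : nat} (U : Rd d -> Prop) : Prop :=
  forall x, U x -> exists r, 0 < r /\ forall y, distRd x y < r -> U y.
Definition is_convex {d : nat} (U : Rd d -> Prop) : Prop :=
  forall x y t, U x -> U y -> 0 <= t <= 1 -> U (comb t x y).
Definition is_bounded {d : nat} (U : Rd d -> Prop) : Prop :=
  exists M, forall x, U x -> normRd x <= M.
Definition nonempty {d : nat} (U : Rd d -> Prop) : Prop := exists x, U x.

Definition closure {d : nat} (U : Rd d -> Prop) (x : Rd d) : Prop :=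
  forall e, 0 < e -> exists y, U y /\ distRd x y < e.
Definition boundary {d : nat} (U : Rd d -> Prop) (x : Rd d) : Prop :=
  closure U x /\ closure (fun y => ~ U y) x.

(* Omega_delta = { x in Omega : dist(x, boundary Omega) > delta }
   (dist to the empty set is +infinity) *)
Definition inner_set {d : nat} (U : Rd d -> Prop) (delta : R) (x : Rd d) : Prop :=
  U x /\ exists delta', delta < delta' /\
          forall y, boundary U y -> delta' <= distRd x y.

Definition subset {d : nat} (A B : Rd d -> Prop) : Prop := forall x, A x -> B x.

(* W^+(U): v is convex (and real-valued) on U *)
Definition convex_fun_on {d : nat} (U : Rd d -> Prop) (v : Rd d -> R) : Prop :=
  forall x y t, U x -> U y -> 0 <= t <= 1 ->
    v (comb t x y) <= t * v x + (1 - t) * v y.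

Definition is_liminf {d : nat} (U : Rd d -> Prop) (f : Rd d -> R) (y : Rd d) (L : R)
  : Prop :=
  (forall e, 0 < e -> exists r, 0 < r /\
      forall x, U x -> distRd x y < r -> L - e < f x) /\
  (forall e r, 0 < e -> 0 < r -> exists x, U x /\ distRd x y < r /\ f x < L + e).

(* liminf_{U ∋ x -> y} f x <= c  (in the extended reals) *)
Definition liminf_le {d : nat} (U : Rd d -> Prop) (f : Rd d -> R) (y : Rd d) (c : R)
  : Prop :=
  forall e r, 0 < e -> 0 < r -> exists x, U x /\ distRd x y < r /\ f x < c + e.

Definition continuous_on {d : nat} (A : Rd d -> Prop) (b : Rd d -> R) : Prop :=
  forall y, A y -> forall e, 0 < e -> exists r, 0 < r /\
    forall y', A y' -> distRd y y' < r -> Rabs (b y' - b y) < e.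

Definition cv1 {d : nat} (zs : nat -> Rd d * R) (z : Rd d * R) : Prop :=
  forall e, 0 < e -> exists N, forall n, (N <= n)%nat -> distRd1 (zs n) z < e.

Definition upper_top_lim {d : nat} (E : nat -> Rd d * R -> Prop) (z : Rd d * R) : Prop :=
  exists (phi : nat -> nat) (zs : nat -> Rd d * R),
    (forall k, (phi k < phi (S k))%nat) /\
    (forall k, E (phi k) (zs k)) /\ cv1 zs z.
Definition lower_top_lim {d : nat} (E : nat -> Rd d * R -> Prop) (z : Rd d * R) : Prop :=
  exists (zs : nat -> Rd d * R) (N : nat),
    (forall n, (N <= n)%nat -> E n (zs n)) /\ cv1 zs z.
Definition top_lim {d : nat} (E : nat -> Rd d * R -> Prop) (S : Rd d * R -> Prop) : Prop :=
  forall z, (upper_top_lim E z <-> S z) /\ (lower_top_lim E z <-> S z).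

Definition graph_on_boundary {d : nat} (U : Rd d -> Prop) (b : Rd d -> R)
  (z : Rd d * R) : Prop :=
  boundary U (fst z) /\ snd z = b (fst z).

(** Fix a boundary point [x] of [Omega] and an interior point [p].  A small
    cube around [p] lies in every [Omega_n] for large [n], and by convexity
    and pointwise convergence at its vertices the [v_n] are eventually
    bounded above on it by a constant [M].  The topological convergence of
    the graphs gives boundary points [y_n] of [Omega_n] tending to [x] with
    [b_n y_n] close to [btilde x], hence interior points [x_n] near [x] where
    [v_n] is below [btilde x + e/2].  The point [q = (1 - mu) x + mu p] is a
    convex combination [(1 - mu) x_n + mu w_n] with [w_n] in the cube, so
    [v_n q <= (1 - mu) (btilde x + e/2) + mu M]; letting [n] go to infinity
    and then [mu] to [0] makes [v0] small at points [q] close to [x]. *)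

From Stdlib Require Import Reals Lra Lia Psatz FunctionalExtensionality ProofIrrelevance.
Open Scope R_scope.

Lemma Rabs_le_bounds (x a : R) : Rabs x <= a -> - a <= x <= a.
Proof. unfold Rabs; destruct (Rcase_abs x); lra. Qed.

Lemma Un_cv_le_eventually (u : nat -> R) (l K : R) (N : nat) :
  Un_cv u l -> (forall n, (N <= n)%nat -> u n <= K) -> l <= K.
Proof.
  intros Hu HK. destruct (Rle_dec l K) as [|Hlt]; auto.
  destruct (Hu (l - K)) as [M HM]; [lra|].
  specialize (HM (max N M) ltac:(lia)). specialize (HK (max N M) ltac:(lia)).
  unfold R_dist in HM. apply Rabs_def2 in HM. lra.
Qed.

Lemma Un_cv_bounded_above (u : nat -> R) (l : R) :
  Un_cv u l -> exists N, forall n, (N <= n)%nat -> u n <= l + 1.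
Proof.
  intros Hu. destruct (Hu 1 ltac:(lra)) as [N HN]. exists N. intros n Hn.
  specialize (HN n Hn). unfold R_dist in HN. apply Rabs_def2 in HN. lra.
Qed.

Lemma exists_small_factor (C1 C2 e1 e2 : R) : 0 < e1 -> 0 < e2 ->
  exists mu, 0 < mu <= 1 /\ mu * Rabs C1 < e1 /\ mu * Rabs C2 < e2.
Proof.
  intros He1 He2. pose proof (Rabs_pos C1). pose proof (Rabs_pos C2).
  set (m1 := e1 / (Rabs C1 + 1)). set (m2 := e2 / (Rabs C2 + 1)).
  assert (Hm1 : 0 < m1 /\ m1 * Rabs C1 < e1).
  { unfold m1. split; [apply Rdiv_lt_0_compat; lra|].
    apply (Rmult_lt_reg_r (Rabs C1 + 1)); [lra|]. field_simplify; lra. }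
  assert (Hm2 : 0 < m2 /\ m2 * Rabs C2 < e2).
  { unfold m2. split; [apply Rdiv_lt_0_compat; lra|].
    apply (Rmult_lt_reg_r (Rabs C2 + 1)); [lra|]. field_simplify; lra. }
  exists (Rmin 1 (Rmin m1 m2)).
  pose proof (Rmin_l 1 (Rmin m1 m2)). pose proof (Rmin_r 1 (Rmin m1 m2)).
  pose proof (Rmin_l m1 m2). pose proof (Rmin_r m1 m2).
  split; [split; [apply Rmin_glb_lt; [lra| apply Rmin_glb_lt; lra] | lra]|].
  split; nra.
Qed.

Section Coordinates.

Variable d : nat.

Lemma Rd_of_ok (f : nat -> R) :
  forall i, (d <= i)%nat -> (if Nat.ltb i d then f i else 0) = 0.
Proof. intros i Hi. destruct (Nat.ltb_spec i d); [lia|reflexivity]. Qed.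

Definition Rd_of (f : nat -> R) : Rd d :=
  exist _ (fun i => if Nat.ltb i d then f i else 0) (Rd_of_ok f).

Lemma coord_Rd_of (f : nat -> R) i : (i < d)%nat -> coord (Rd_of f) i = f i.
Proof. intros Hi. unfold coord, Rd_of; simpl. destruct (Nat.ltb_spec i d); [reflexivity|lia]. Qed.

Lemma coord_comb (t : R) (x y : Rd d) i :
  coord (comb t x y) i = t * coord x i + (1 - t) * coord y i.
Proof. reflexivity. Qed.

Lemma coord_out (x : Rd d) i : (d <= i)%nat -> coord x i = 0.
Proof. intros Hi. exact (proj2_sig x i Hi). Qed.

Lemma Rd_ext (x y : Rd d) :
  (forall i, (i < d)%nat -> coord x i = coord y i) -> x = y.
Proof.
  destruct x as [fx Hx], y as [fy Hy]; unfold coord; simpl; intros H.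
  assert (fx = fy) as <-.
  { apply functional_extensionality; intros i.
    destruct (Nat.ltb_spec i d); [apply H; lia|]. rewrite Hx, Hy by lia; reflexivity. }
  f_equal. apply proof_irrelevance.
Qed.

Lemma sum_f_R0_term_le (f : nat -> R) (n i : nat) :
  (forall k, 0 <= f k) -> (i <= n)%nat -> f i <= sum_f_R0 f n.
Proof.
  intros Hf; induction n; intros Hi.
  - replace i with 0%nat by lia; simpl; lra.
  - simpl. destruct (Nat.eq_dec i (S n)) as [->|Hne].
    + assert (0 <= sum_f_R0 f n) by (apply cond_pos_sum; auto). lra.
    + specialize (IHn ltac:(lia)). specialize (Hf (S n)). lra.
Qed.

Lemma coord_dist_le (x y : Rd d) i :
  Rabs (coord x i - coord y i) <= distRd x y.
Proof.
  unfold distRd. destruct (Compare_dec.le_lt_dec i d) as [Hi|Hi].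
  - rewrite <- sqrt_Rsqr_abs. apply sqrt_le_1_alt. rewrite Rsqr_pow2.
    apply (sum_f_R0_term_le (fun k => (coord x k - coord y k) ^ 2)); auto.
    intros k. apply pow2_ge_0.
  - rewrite !coord_out by lia. rewrite Rminus_0_r, Rabs_R0. apply sqrt_pos.
Qed.

(* Crude: [distRd] sums over the [d + 1] indices [0..d] (the last term
   vanishes), and [sqrt (d + 1) <= d + 1]. *)
Lemma dist_le_coord_bound (x y : Rd d) c : 0 <= c ->
  (forall i, (i < d)%nat -> Rabs (coord x i - coord y i) <= c) ->
  distRd x y <= INR (S d) * c.
Proof.
  intros Hc H. unfold distRd.
  assert (Hs : sum_f_R0 (fun i => (coord x i - coord y i) ^ 2) d
               <= sum_f_R0 (fun _ => c ^ 2) d).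
  { apply sum_Rle. intros i Hi. destruct (Nat.eq_dec i d) as [->|Hne].
    - rewrite !coord_out by lia. simpl. nra.
    - rewrite <- !Rsqr_pow2, Rsqr_abs. apply Rsqr_incr_1; [apply H; lia| apply Rabs_pos| lra]. }
  rewrite sum_cte in Hs.
  assert (1 <= INR (S d)) by (apply (le_INR 1); lia).
  rewrite <- (sqrt_pow2 (INR (S d) * c)) by nra.
  apply sqrt_le_1_alt. nra.
Qed.

Lemma distRd_diag (x : Rd d) : distRd x x = 0.
Proof.
  unfold distRd. rewrite sum_eq_R0; [apply sqrt_0|].
  intros i _. rewrite Rminus_diag. ring.
Qed.

Lemma closure_incl (U : Rd d -> Prop) x : U x -> closure U x.
Proof. intros Hx e He. exists x. rewrite distRd_diag. auto. Qed.

Lemma distRd1_lt_components (z w : Rd d * R) eps :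
  distRd1 z w < eps -> distRd (fst z) (fst w) < eps /\ Rabs (snd z - snd w) < eps.
Proof.
  unfold distRd1. intros H.
  assert (0 <= distRd (fst z) (fst w)) by (unfold distRd; apply sqrt_pos).
  set (a := distRd (fst z) (fst w)) in *. set (c := snd z - snd w) in *.
  pose proof (pow2_ge_0 a). pose proof (pow2_ge_0 c).
  split; eapply Rle_lt_trans; try exact H.
  - rewrite <- (sqrt_pow2 a) at 1 by auto. apply sqrt_le_1_alt. lra.
  - rewrite <- sqrt_Rsqr_abs, Rsqr_pow2. apply sqrt_le_1_alt. lra.
Qed.

Lemma dist_comb_le (t : R) (x y : Rd d) : 0 <= t <= 1 ->
  distRd (comb t x y) x <= INR (S d) * ((1 - t) * distRd y x).
Proof.
  intros Ht. apply dist_le_coord_bound.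
  - apply Rmult_le_pos; [lra| unfold distRd; apply sqrt_pos].
  - intros i _. rewrite coord_comb.
    replace (t * coord x i + (1 - t) * coord y i - coord x i)
      with ((1 - t) * (coord y i - coord x i)) by ring.
    rewrite Rabs_mult, (Rabs_right (1 - t)) by lra.
    apply Rmult_le_compat_l; [lra| apply coord_dist_le].
Qed.

(* The coordinates of index [>= k] are frozen at those of [c]: [in_box d] is
   the full cube, smaller [k] give the faces used in the induction. *)
Definition in_box (k : nat) (c : Rd d) (rho : R) (y : Rd d) : Prop :=
  forall i, (i < d)%nat -> ((i < k)%nat -> Rabs (coord y i - coord c i) <= rho) /\
                          ((k <= i)%nat -> coord y i = coord c i).

Definition set_coord (y : Rd d) (k : nat) (a : R) : Rd d :=
  Rd_of (fun i => if Nat.eqb i k then a else coord y i).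

Lemma coord_set_coord (y : Rd d) k a i : (i < d)%nat ->
  coord (set_coord y k a) i = if Nat.eqb i k then a else coord y i.
Proof. intros; unfold set_coord; rewrite coord_Rd_of; auto. Qed.

Lemma in_box_0 (c : Rd d) rho y : in_box 0 c rho y -> y = c.
Proof. intros Hy. apply Rd_ext; intros i Hi. apply (Hy i Hi); lia. Qed.

Lemma in_box_face (k : nat) (c : Rd d) rho s y : Rabs s <= rho ->
  in_box k (set_coord c k (coord c k + s)) rho y -> in_box (S k) c rho y.
Proof.
  intros Hs Hy i Hi. destruct (Hy i Hi) as [Hlow Hhigh].
  rewrite coord_set_coord in Hlow, Hhigh by auto.
  split; intros Hik; destruct (Nat.eqb_spec i k) as [->|Hne].
  - rewrite Hhigh by lia. replace (coord c k + s - coord c k) with s by ring. auto.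
  - apply Hlow; lia.
  - lia.
  - apply Hhigh; lia.
Qed.

Lemma in_box_S_split (k : nat) (c : Rd d) rho y : (k < d)%nat -> 0 < rho ->
  in_box (S k) c rho y ->
  exists t yp ym, 0 <= t <= 1 /\ y = comb t yp ym /\
    in_box k (set_coord c k (coord c k + rho)) rho yp /\
    in_box k (set_coord c k (coord c k - rho)) rho ym.
Proof.
  intros Hkd Hrho Hy.
  assert (Hyk : - rho <= coord y k - coord c k <= rho)
    by (apply Rabs_le_bounds, (Hy k Hkd); lia).
  exists ((coord y k - (coord c k - rho)) / (2 * rho)),
    (set_coord y k (coord c k + rho)), (set_coord y k (coord c k - rho)).
  assert (Hface : forall a, in_box k (set_coord c k a) rho (set_coord y k a)).
  { intros a i Hi. rewrite !coord_set_coord by auto.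
    destruct (Nat.eqb_spec i k); [split; intros; [lia|auto]|].
    destruct (Hy i Hi) as [Hlow Hhigh]. split; intros; [apply Hlow| apply Hhigh]; lia. }
  split; [|split; [|split; apply Hface]].
  - split.
    + apply Rmult_le_pos; [lra| apply Rlt_le, Rinv_0_lt_compat; lra].
    + apply (Rmult_le_reg_r (2 * rho)); [lra|]. field_simplify; lra.
  - apply Rd_ext; intros i Hi. rewrite coord_comb, !coord_set_coord by auto.
    destruct (Nat.eqb_spec i k) as [->|]; [field; lra| ring].
Qed.

End Coordinates.

Arguments in_box {d}.
Arguments set_coord {d}.

Section ConvexSequences.

Variables (d : nat) (U : nat -> Rd d -> Prop) (f : nat -> Rd d -> R).
Hypothesis U_convex : forall n, is_convex (U n).
Hypothesis f_convex : forall n, convex_fun_on (U n) (f n).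

(* Uniformity comes from convexity: the bound at the [2^k] vertices of the
   box controls every point of it. *)
Lemma convex_bounded_on_box (rho : R) : 0 < rho ->
  forall k, (k <= d)%nat -> forall c : Rd d,
    (forall y, in_box k c rho y ->
       exists N B, forall n, (N <= n)%nat -> U n y /\ f n y <= B) ->
    exists N B, forall n, (N <= n)%nat -> forall y, in_box k c rho y ->
      U n y /\ f n y <= B.
Proof.
  intros Hrho k. induction k as [|k IH]; intros Hk c Hpt.
  - assert (Hc : in_box 0 c rho c) by (intros i Hi; split; [lia|auto]).
    destruct (Hpt c Hc) as [N [B HB]]. exists N, B. intros n Hn y Hy.
    rewrite (in_box_0 d c rho y Hy). auto.
  - destruct (IH ltac:(lia) (set_coord c k (coord c k + rho))) as [Np [Bp HBp]].
    { intros y Hy. apply Hpt, (in_box_face d k c rho rho); [|auto].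
      rewrite Rabs_right; lra. }
    destruct (IH ltac:(lia) (set_coord c k (coord c k - rho))) as [Nm [Bm HBm]].
    { intros y Hy. apply Hpt, (in_box_face d k c rho (- rho)).
      - rewrite Rabs_Ropp, Rabs_right; lra.
      - replace (coord c k + - rho) with (coord c k - rho) by ring. auto. }
    exists (max Np Nm), (Rmax Bp Bm). intros n Hn y Hy.
    destruct (in_box_S_split d k c rho y ltac:(lia) Hrho Hy)
      as [t [yp [ym [Ht [-> [Hyp Hym]]]]]].
    destruct (HBp n ltac:(lia) yp Hyp) as [Up Fp].
    destruct (HBm n ltac:(lia) ym Hym) as [Um Fm].
    pose proof (Rmax_l Bp Bm). pose proof (Rmax_r Bp Bm).
    split; [apply U_convex; auto|].
    eapply Rle_trans; [apply f_convex; auto| nra].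
Qed.

(* [q = (1 - mu) x + mu p] is also [(1 - mu) xn + mu wn], where
   [wn = p + ((1 - mu) / mu) (x - xn)] lies in the cube around [p]. *)
Lemma convex_bound_toward_box (n : nat) (p x xn : Rd d) (rho mu a M : R) :
  0 < mu <= 1 -> U n xn -> f n xn <= a ->
  (forall w, in_box d p rho w -> U n w /\ f n w <= M) ->
  (forall i, (i < d)%nat -> Rabs (coord x i - coord xn i) <= rho * mu) ->
  U n (comb (1 - mu) x p) /\ f n (comb (1 - mu) x p) <= (1 - mu) * a + mu * M.
Proof.
  intros Hmu Hxn Hfxn Hbox Hclose.
  set (w := Rd_of d (fun i => coord p i + ((1 - mu) / mu) * (coord x i - coord xn i))).
  assert (Hk : 0 <= (1 - mu) / mu)
    by (apply Rmult_le_pos; [lra| apply Rlt_le, Rinv_0_lt_compat; lra]).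
  assert (Hw : in_box d p rho w).
  { intros i Hi. split; [intros _| lia].
    unfold w. rewrite coord_Rd_of by auto.
    replace (coord p i + (1 - mu) / mu * (coord x i - coord xn i) - coord p i)
      with ((1 - mu) / mu * (coord x i - coord xn i)) by ring.
    rewrite Rabs_mult, (Rabs_right ((1 - mu) / mu)) by lra.
    assert ((1 - mu) / mu * mu = 1 - mu) by (field; lra).
    specialize (Hclose i Hi). pose proof (Rabs_pos (coord x i - coord xn i)). nra. }
  assert (Eq : comb (1 - mu) x p = comb (1 - mu) xn w).
  { apply Rd_ext; intros i Hi. rewrite !coord_comb. unfold w. rewrite coord_Rd_of by auto.
    field. lra. }
  destruct (Hbox w Hw) as [Uw Fw].
  rewrite Eq. split; [apply U_convex; auto; lra|].
  eapply Rle_trans; [apply f_convex; auto; lra| nra].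
Qed.

End ConvexSequences.

Lemma box_in_inner_set (d : nat) (Omega : Rd d -> Prop) (p : Rd d) (R0 rho : R) :
  0 < rho -> INR (S d) * (3 * rho) < R0 ->
  (forall y, distRd p y < R0 -> Omega y) ->
  forall y, in_box d p rho y -> inner_set Omega (rho / 2) y.
Proof.
  intros Hrho HR0 Hball y Hy.
  assert (Hpy : forall i, (i < d)%nat -> Rabs (coord p i - coord y i) <= rho).
  { intros i Hi. rewrite Rabs_minus_sym. apply (Hy i Hi); lia. }
  split.
  - apply Hball. pose proof (dist_le_coord_bound d p y rho ltac:(lra) Hpy).
    pose proof (pos_INR (S d)). nra.
  - exists rho. split; [lra|]. intros z [_ Hz].
    destruct (Rle_dec rho (distRd y z)) as [|Hnear]; auto. exfalso.
    destruct (Hz rho Hrho) as [w [Hw Hzw]]. apply Hw, Hball.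
    eapply Rle_lt_trans; [apply (dist_le_coord_bound d p w (3 * rho)); [lra|]| lra].
    intros i Hi.
    replace (coord p i - coord w i)
      with ((coord p i - coord y i) + (coord y i - coord z i) + (coord z i - coord w i)) by ring.
    pose proof (Hpy i Hi). pose proof (coord_dist_le d y z i). pose proof (coord_dist_le d z w i).
    pose proof (Rabs_triang (coord p i - coord y i + (coord y i - coord z i)) (coord z i - coord w i)).
    pose proof (Rabs_triang (coord p i - coord y i) (coord y i - coord z i)). lra.
Qed.

Lemma small_values_near_limit_point (d : nat) (U : nat -> Rd d -> Prop)
  (f g : nat -> Rd d -> R) (x : Rd d) (a : R) :
  lower_top_lim (fun n => graph_on_boundary (U n) (g n)) (x, a) ->
  (forall n y, boundary (U n) y -> liminf_le (U n) (f n) y (g n y)) ->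
  forall e r, 0 < e -> 0 < r -> exists N, forall n, (N <= n)%nat ->
    exists xn, U n xn /\ f n xn < a + e /\
      forall i, Rabs (coord x i - coord xn i) < r.
Proof.
  intros [zs [N0 [Hgraph Hcv]]] Hliminf e r He Hr.
  destruct (Hcv (Rmin (r / 2) (e / 2))) as [N1 HN1]; [apply Rmin_glb_lt; lra|].
  exists (max N0 N1). intros n Hn.
  destruct (Hgraph n ltac:(lia)) as [Hyn Hgn].
  destruct (distRd1_lt_components d _ _ _ (HN1 n ltac:(lia))) as [Hdist Hval].
  simpl in Hdist, Hval. rewrite Hgn in Hval.
  pose proof (Rmin_l (r / 2) (e / 2)). pose proof (Rmin_r (r / 2) (e / 2)).
  destruct (Hliminf n _ Hyn (e / 2) (r / 2) ltac:(lra) ltac:(lra)) as [xn [Hxn [Hxy Hfx]]].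
  exists xn. apply Rabs_def2 in Hval. split; [auto| split; [lra|]].
  intros i.
  replace (coord x i - coord xn i)
    with ((coord x i - coord (fst (zs n)) i) + (coord (fst (zs n)) i - coord xn i)) by ring.
  pose proof (coord_dist_le d (fst (zs n)) x i). pose proof (coord_dist_le d xn (fst (zs n)) i).
  rewrite Rabs_minus_sym in H1. rewrite Rabs_minus_sym in H2.
  pose proof (Rabs_triang (coord x i - coord (fst (zs n)) i) (coord (fst (zs n)) i - coord xn i)).
  lra.
Qed.

Lemma eventually_bounded_on_cube (d : nat) (Omega : Rd d -> Prop)
  (Omegan : nat -> Rd d -> Prop) (v : nat -> Rd d -> R) (v0 : Rd d -> R)
  (p : Rd d) (R0 : R) :
  0 < R0 -> (forall y, distRd p y < R0 -> Omega y) ->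
  (forall n, is_convex (Omegan n)) -> (forall n, convex_fun_on (Omegan n) (v n)) ->
  (forall delta, 0 < delta -> exists N, forall n, (N <= n)%nat ->
     subset (closure (inner_set Omega delta)) (Omegan n)) ->
  (forall y, Omega y -> Un_cv (fun n => v n y) (v0 y)) ->
  exists rho N M, 0 < rho /\ forall n, (N <= n)%nat ->
    forall y, in_box d p rho y -> Omegan n y /\ v n y <= M.
Proof.
  intros HR0 Hball Hconv Hv Hinner Hcv.
  assert (HSd : 1 <= INR (S d)) by (apply (le_INR 1); lia).
  set (rho := R0 / (4 * INR (S d))).
  assert (Hrho : 0 < rho) by (apply Rdiv_lt_0_compat; lra).
  assert (Hcube : INR (S d) * (3 * rho) < R0) by (unfold rho; field_simplify; lra).
  destruct (Hinner (rho / 2) ltac:(lra)) as [N HN].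
  destruct (convex_bounded_on_box d Omegan v Hconv Hv rho Hrho d (le_n d) p)
    as [N1 [M HM]]; [|exists rho, N1, M; auto].
  intros y Hy.
  pose proof (box_in_inner_set d Omega p R0 rho Hrho Hcube Hball y Hy) as Hyin.
  destruct (Un_cv_bounded_above _ _ (Hcv y (proj1 Hyin))) as [N' HN'].
  exists (max N N'), (v0 y + 1). intros n Hn. split; [|apply HN'; lia].
  apply (HN n ltac:(lia)), closure_incl, Hyin.
Qed.

Theorem mainTheorem8 (d : nat) (Omega : Rd d -> Prop)
  (Omegan : nat -> Rd d -> Prop) (v : nat -> Rd d -> R) (v0 : Rd d -> R)
  (b : nat -> Rd d -> R) (btilde : Rd d -> R)
  (HOmega : is_open Omega /\ is_convex Omega /\ is_bounded Omega /\ nonempty Omega)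
  (HOmegan : forall n, is_open (Omegan n) /\ is_convex (Omegan n) /\
                       nonempty (Omegan n) /\ subset (Omegan n) Omega)
  (Hexh : forall delta, 0 < delta -> exists N, forall n, (N <= n)%nat ->
            subset (closure (inner_set Omega delta)) (Omegan n) /\
            subset (Omegan n) Omega)
  (Hv : forall n, convex_fun_on (Omegan n) (v n))
  (Hv0 : convex_fun_on Omega v0)
  (Hi : forall x, Omega x -> Un_cv (fun n => v n x) (v0 x))
  (Hii_border : forall n y, boundary (Omegan n) y -> is_liminf (Omegan n) (v n) y (b n y))
  (Hii_cont : forall n, continuous_on (boundary (Omegan n)) (b n))
  (Hiii_cont : continuous_on (boundary Omega) btilde)
  (Hiii_lim : top_lim (fun n => graph_on_boundary (Omegan n) (b n))
                      (graph_on_boundary Omega btilde)) :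
  forall x, boundary Omega x -> liminf_le Omega v0 x (btilde x).
Proof.
  intros x Hx e r He Hr.
  destruct HOmega as [Hopen [_ [_ [p Hp]]]].
  destruct (Hopen p Hp) as [R0 [HR0 Hball]].
  assert (Hinner : forall delta, 0 < delta -> exists N, forall n, (N <= n)%nat ->
                     subset (closure (inner_set Omega delta)) (Omegan n)).
  { intros delta Hdelta. destruct (Hexh delta Hdelta) as [N HN].
    exists N. intros n Hn. exact (proj1 (HN n Hn)). }
  destruct (eventually_bounded_on_cube d Omega Omegan v v0 p R0 HR0 Hball
              (fun n => proj1 (proj2 (HOmegan n))) Hv Hinner Hi) as [rho [N1 [M [Hrho HM]]]].
  destruct (exists_small_factor (M - btilde x - e / 2) (INR (S d) * distRd p x) (e / 2) r)
    as [mu [Hmu [HmuM HmuD]]]; [lra| lra|].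
  destruct (small_values_near_limit_point d Omegan v b x (btilde x)
              (proj2 (proj2 (Hiii_lim (x, btilde x))) (conj Hx eq_refl))
              (fun n y Hy => proj2 (Hii_border n y Hy)) (e / 2) (rho * mu)
              ltac:(lra) ltac:(nra)) as [N2 HN2].
  set (q := comb (1 - mu) x p).
  assert (Hq : forall n, (max N1 N2 <= n)%nat ->
            Omegan n q /\ v n q <= (1 - mu) * (btilde x + e / 2) + mu * M).
  { intros n Hn. destruct (HN2 n ltac:(lia)) as [xn [Hxn [Hvxn Hclose]]].
    apply (convex_bound_toward_box d Omegan v (fun n => proj1 (proj2 (HOmegan n))) Hv
             n p x xn rho);
      auto; [lra| apply HM; lia| intros i _; apply Rlt_le, Hclose]. }
  assert (HqO : Omega q) by exact (proj2 (proj2 (proj2 (HOmegan _))) q (proj1 (Hq _ (le_n _)))).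
  exists q. split; [exact HqO| split].
  - eapply Rle_lt_trans; [apply dist_comb_le; lra|].
    replace (1 - (1 - mu)) with mu by ring.
    pose proof (Rle_abs (INR (S d) * distRd p x)). nra.
  - assert (v0 q <= (1 - mu) * (btilde x + e / 2) + mu * M)
      by (apply (Un_cv_le_eventually _ _ _ (max N1 N2) (Hi q HqO)), Hq).
    pose proof (Rle_abs (M - btilde x - e / 2)). nra.
Qed.
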